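(* If $(C_1,F_1)$ and $(C_2,F_2)$ are antlers in an undirected multigraph $G$, then $(C_1\setminus(C_2\cup F_2),\,F_1\setminus(C_2\cup F_2))$ is an antler in $G-(C_2\cup F_2)$.
   Context: A feedback vertex set (FVS) of $G$ is a set $X\subseteq V(G)$ with $G-X$ acyclic (self-loops and pairs of parallel edges count as cycles); $\mathrm{fvs}(G)$ is the minimum size of a FVS. For disjoint $X,Y$, $e(X,Y)$ is the number of edges between $X$ and $Y$. A feedback vertex cut (FVC) in $G$ is a pair of disjoint sets $C,F\subseteq V(G)$ such that $G[F]$ is a forest and every tree $T$ of $G[F]$ satisfies $e(V(T),V(G)\setminus(C\cup F))\le1$. An antler in $G$ is a FVC $(C,F)$ with $|C|\le\mathrm{fvs}(G[C\cup F])$. *)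

From mathcomp Require Import all_boot.
Set Implicit Arguments. Unset Strict Implicit. Unset Printing Implicit Defensive.

(* A multigraph on vertex type V: a finite edge type with an (unordered) pair
   of endpoints per edge. A loop is an edge with equal endpoints. *)
Record mgraph (V : finType) := MGraph { edge : finType; ends : edge -> V * V }.

Section Defs.
Variables (V : finType) (G : mgraph V).

Definition links (e : edge G) (x y : V) : bool :=
  (ends e == (x, y)) || (ends e == (y, x)).

(* A cycle in the induced subgraph G[S]: distinct vertices v_0..v_{k-1} in S
   (k >= 1) and distinct edges e_0..e_{k-1}, e_i joining v_i and v_{i+1 mod k}.
   k = 1 is a self-loop, k = 2 a pair of parallel edges. *)
Definition is_cycle (S : {set V}) (v0 : V) (vs : seq V) (e0 : edge G)
    (es : seq (edge G)) : Prop :=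
  let cv := v0 :: vs in let ce := e0 :: es in
  [/\ size ce = size cv, uniq cv, uniq ce, {subset cv <= S} &
      forall i, i < size cv ->
        links (nth e0 ce i) (nth v0 cv i) (nth v0 cv (i.+1 %% size cv))].

Definition acyclic (S : {set V}) : Prop :=
  forall v0 vs e0 es, ~ is_cycle S v0 vs e0 es.

Definition adjF (F : {set V}) : rel V :=
  fun x y => [&& x \in F, y \in F & [exists e : edge G, links e x y]].

Definition comp (F : {set V}) (x : V) : {set V} := [set y | connect (adjF F) x y].

Definition ecount (X Y : {set V}) : nat :=
  #|[set e : edge G | (((ends e).1 \in X) && ((ends e).2 \in Y))
                   || (((ends e).1 \in Y) && ((ends e).2 \in X))]|.

(* Notions relative to the graph G[S] (S = its vertex set). *)
Definition is_fvs (W X : {set V}) : Prop := X \subset W /\ acyclic (W :\: X).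

Definition FVC (S C F : {set V}) : Prop :=
  [/\ C \subset S, F \subset S, [disjoint C & F], acyclic F &
      forall x, x \in F -> ecount (comp F x) (S :\: (C :|: F)) <= 1].

Definition antler (S C F : {set V}) : Prop :=
  FVC S C F /\ forall X, is_fvs (C :|: F) X -> #|C| <= #|X|.

End Defs.

From Pilot Require Import Defs.
From mathcomp Require Import all_boot zify.
Set Implicit Arguments. Unset Strict Implicit. Unset Printing Implicit Defensive.

(* Let A_i = C_i :|: F_i and W = A_2.  The key fact is that for a feedback
   vertex cut (C, F), any Q inside F together with an acyclic R outside C :|: F
   is still acyclic: a cycle meeting a tree T of G[F] without staying in it
   leaves T and re-enters it, through two edges from T to V :\: (C :|: F),
   whereas T has at most one such edge.  Hence (C_2 :\: F_1) :|: (C_1 :&: F_2)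
   is a FVS of G[A_2], so |C_2 :&: F_1| <= |C_1 :&: F_2|; and for every FVS X
   of G[A_1 :\: W], X :|: (A_1 :&: C_2) is a FVS of G[A_1], so
   |C_1| <= |X| + |C_1 :&: C_2| + |F_1 :&: C_2| <= |X| + |C_1 :&: W|. *)

Lemma exists_switch_mod (n : nat) (f : nat -> bool) a b :
  a < n -> b < n -> f a -> ~~ f b -> exists2 i, i < n & f i && ~~ f (i.+1 %% n).
Proof.
move=> lt_an lt_bn fa fb.
have [/existsP[i fi]|/existsPn no_switch] :=
  boolP [exists i : 'I_n, f i && ~~ f (i.+1 %% n)]; first by exists i.
have f_from_a m : f ((a + m) %% n).
  elim: m => [|m IHm]; first by rewrite addn0 modn_small.
  have := no_switch (Ordinal (ltn_pmod (a + m) (leq_ltn_trans (leq0n a) lt_an))).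
  by rewrite /= IHm /= negbK -addn1 modnDml addn1 addnS.
have := f_from_a (b + n - a); have -> : a + (b + n - a) = b + n by lia.
by rewrite modnDr modn_small // (negbTE fb).
Qed.

Lemma card_setIU_disjoint (T : finType) (A B C : {set T}) : [disjoint B & C] ->
  #|A :&: (B :|: C)| = #|A :&: B| + #|A :&: C|.
Proof.
move=> disBC; rewrite setIUr; apply/eqP; rewrite (leq_card_setU _ _).2.
exact: disjointWl (subsetIr A B) (disjointWr (subsetIr A C) disBC).
Qed.

Section Antlers.
Variables (V : finType) (G : mgraph V).
Implicit Types (S T W X Y C F Q R : {set V}).

Definition edges_between (X Y : {set V}) : {set edge G} :=
  [set e | (((ends e).1 \in X) && ((ends e).2 \in Y))
        || (((ends e).1 \in Y) && ((ends e).2 \in X))].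

Lemma ecountE X Y : ecount G X Y = #|edges_between X Y|.
Proof. by []. Qed.

Lemma edges_betweenP X Y (e : edge G) :
  reflect (exists x y, [/\ x \in X, y \in Y & links e x y]) (e \in edges_between X Y).
Proof.
rewrite inE /links; case: (ends e) => u v /=; apply: (iffP idP).
  by case/orP=> /andP[uX vY]; [exists u, v | exists v, u]; rewrite ?eqxx ?orbT.
by case=> x [y [xX yY /orP[]/eqP[-> ->]]]; rewrite ?xX ?yY ?orbT.
Qed.

Lemma ecountS X X' Y Y' :
  X \subset X' -> Y \subset Y' -> ecount G X Y <= ecount G X' Y'.
Proof.
move=> /subsetP sXX' /subsetP sYY'; rewrite !ecountE; apply/subset_leq_card/subsetP.
move=> e /edges_betweenP[x [y [xX yY xy]]]; apply/edges_betweenP.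
by exists x, y; rewrite sXX' ?sYY'.
Qed.

Lemma linksC (e : edge G) x y : links e x y = links e y x.
Proof. by rewrite /links orbC. Qed.

Lemma is_cycle_sub S T v0 vs (e0 : edge G) es :
  is_cycle S v0 vs e0 es -> {subset v0 :: vs <= T} -> is_cycle T v0 vs e0 es.
Proof. by case. Qed.

Lemma acyclicS S T : T \subset S -> acyclic G S -> acyclic G T.
Proof.
move=> /subsetP sTS acycS v0 vs e0 es cyc; apply: (acycS v0 vs e0 es).
by apply: is_cycle_sub (cyc) _; case: cyc => _ _ _ sub _ v /sub/sTS.
Qed.

Lemma mem_comp F x : x \in Defs.comp G F x.
Proof. by rewrite inE connect0. Qed.

Lemma comp_subset F x : x \in F -> Defs.comp G F x \subset F.
Proof.
move=> xF; apply/subsetP => y; rewrite inE => /connectP[p + ->].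
by elim: p x xF => //= z p IHp x xF /andP[/and3P[_ zF _] /IHp]; apply.
Qed.

Lemma compS F F' x : F' \subset F -> Defs.comp G F' x \subset Defs.comp G F x.
Proof.
move=> /subsetP sF'F; apply/subsetP => y; rewrite !inE; apply: connect_sub => u w.
by case/and3P=> /sF'F uF /sF'F wF uw; apply: connect1; rewrite /adjF uF wF.
Qed.

Lemma comp_closed F x y z (e : edge G) :
  y \in F -> z \in F -> links e y z -> y \in Defs.comp G F x -> z \in Defs.comp G F x.
Proof.
rewrite !inE => yF zF yz /connect_trans; apply; apply: connect1.
by rewrite /adjF yF zF; apply/existsP; exists e.
Qed.

Lemma ecount_comp_setD F Y x : x \in F ->
  ecount G (Defs.comp G F x) (Y :\: Defs.comp G F x)
    <= ecount G (Defs.comp G F x) (Y :\: F).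
Proof.
move=> xF; rewrite !ecountE; apply/subset_leq_card/subsetP => e.
case/edges_betweenP=> y [z [yT /setDP[zY zT] yz]]; apply/edges_betweenP.
have yF := subsetP (comp_subset xF) y yT.
exists y, z; split=> //; rewrite inE zY andbT; apply: contra zT => zF.
exact: comp_closed yz yT.
Qed.

Lemma ecount_cycle_cut S T v0 vs (e0 : edge G) es x y :
  is_cycle S v0 vs e0 es -> x \in v0 :: vs -> y \in v0 :: vs -> x \in T -> y \notin T ->
  1 < ecount G T (S :\: T).
Proof.
case=> size_es _ uniq_es sub_S link_es xcv ycv xT yT.
set cv := v0 :: vs in size_es sub_S link_es xcv ycv.
set ce := e0 :: es in size_es uniq_es link_es.
set n := size cv; have lt_mod i : i.+1 %% n < n by apply: ltn_pmod.
have nth_S i : i < n -> nth v0 cv i \in S by move=> lt_in; apply/sub_S/mem_nth.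
have [i lt_in /andP[iT i1T]] :
    exists2 i, i < n & (nth v0 cv i \in T) && (nth v0 cv (i.+1 %% n) \notin T).
  apply: (exists_switch_mod (a := index x cv) (b := index y cv));
  by rewrite ?index_mem ?nth_index.
have [j lt_jn /andP[jT /negPn j1T]] :
    exists2 j, j < n & (nth v0 cv j \notin T) && ~~ (nth v0 cv (j.+1 %% n) \notin T).
  apply: (exists_switch_mod (a := index y cv) (b := index x cv));
  by rewrite ?index_mem ?nth_index ?negbK.
have neq_ij : nth e0 ce i != nth e0 ce j.
  by rewrite nth_uniq ?size_es //; apply: contraNneq jT => <-.
have <- : #|[set nth e0 ce i; nth e0 ce j]| = 2 by rewrite cards2 neq_ij.
rewrite ecountE; apply/subset_leq_card/subsetP => e.
rewrite in_set2 => /orP[]/eqP->; apply/edges_betweenP.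
  exists (nth v0 cv i), (nth v0 cv (i.+1 %% n)).
  by rewrite inE i1T nth_S //; split=> //; apply: link_es.
exists (nth v0 cv (j.+1 %% n)), (nth v0 cv j).
by rewrite inE jT nth_S // linksC; split=> //; apply: link_es.
Qed.

Lemma FVC_acyclicU C F Q R : FVC G setT C F ->
  Q \subset F -> R \subset ~: (C :|: F) -> acyclic G R -> acyclic G (Q :|: R).
Proof.
case=> _ _ _ acycF cut_le1 /subsetP sQF /subsetP sRout acycR v0 vs e0 es cyc.
have [/allP cv_R | /allPn[x xcv xR]] := boolP (all [in R] (v0 :: vs)).
  exact: acycR (is_cycle_sub cyc cv_R).
have xF : x \in F.
  by case: cyc => _ _ _ /(_ x xcv); rewrite inE (negbTE xR) orbF => /sQF.
have [/allP cv_T | /allPn[y ycv yT]] := boolP (all [in Defs.comp G F x] (v0 :: vs)).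
  exact: acyclicS (comp_subset xF) acycF _ _ _ _ (is_cycle_sub cyc cv_T).
have := ecount_cycle_cut cyc xcv ycv (mem_comp F x) yT; apply/negP; rewrite -leqNgt.
apply: leq_trans (ecount_comp_setD _ xF) (leq_trans _ (cut_le1 x xF)).
apply: ecountS => //; apply/subsetP => v /setDP[/setUP[/sQF vF|/sRout vout] vnF].
  by rewrite vF in vnF.
by rewrite setTD.
Qed.

Lemma FVC_setD C F W : FVC G setT C F -> FVC G (~: W) (C :\: W) (F :\: W).
Proof.
case=> _ _ disCF acycF cut_le1; split.
- by rewrite setDE subsetIr.
- by rewrite setDE subsetIr.
- exact: disjointWl (subsetDl _ _) (disjointWr (subsetDl _ _) disCF).
- exact: acyclicS (subsetDl _ _) acycF.
move=> x /setDP[xF _]; apply: leq_trans (cut_le1 x xF); apply: ecountS.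
  exact/compS/subsetDl.
by apply/subsetP => v; rewrite !inE; case: (v \in W); case: (v \in C); case: (v \in F).
Qed.

Lemma antler_card_le C F C' F' X : antler G setT C F -> FVC G setT C' F' ->
  X \subset C :|: F -> (C :|: F) :&: C' \subset X ->
  acyclic G ((C :|: F) :\: (C' :|: F') :\: X) -> #|C| <= #|X|.
Proof.
move=> [_ minC] fvc' sXA /subsetP sAC'X acycY; apply: minC; split=> //.
apply: acyclicS (FVC_acyclicU fvc' (subsetIr (C :|: F) F') _ acycY).
  apply/subsetP => v /setDP[vA vX]; have := contraNN (sAC'X v) vX.
  move: vA vX; rewrite !inE.
  by case: (v \in C); case: (v \in F); case: (v \in C'); case: (v \in F'); case: (v \in X).
by apply/subsetP => v; rewrite !inE => /andP[_ /andP[]].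
Qed.

Lemma antler_cross_card C1 F1 C2 F2 : FVC G setT C1 F1 -> antler G setT C2 F2 ->
  #|C2 :&: F1| <= #|C1 :&: F2|.
Proof.
move=> fvc1 ant2; have [[_ _ _ acycF2 _] _] := ant2.
have [_ _ disC1F1 _ _] := fvc1.
have : #|C2| <= #|(C2 :\: F1) :|: (C1 :&: F2)|.
  apply: antler_card_le ant2 fvc1 _ _ _.
  - by apply/subsetP => v; rewrite !inE => /orP[]/andP[_ ->]; rewrite ?orbT.
  - apply/subsetP => v; rewrite !inE => /andP[+ vC1]; rewrite vC1 (disjointFr disC1F1 vC1).
    by case/orP=> ->; rewrite ?orbT.
  - apply: acyclicS acycF2; apply/subsetP => v; rewrite !inE.
    by case: (v \in F2); case: (v \in C2); case: (v \in F1); case: (v \in C1).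
have [+ _] := leq_card_setU (C2 :\: F1) (C1 :&: F2); rewrite -(cardsID F1 C2).
lia.
Qed.

End Antlers.

Theorem proposition11 (V : finType) (G : mgraph V) (C1 F1 C2 F2 : {set V}) :
  antler G setT C1 F1 -> antler G setT C2 F2 ->
  antler G (~: (C2 :|: F2)) (C1 :\: (C2 :|: F2)) (F1 :\: (C2 :|: F2)).
Proof.
move=> ant1 ant2; have [fvc1 _] := ant1; have [fvc2 _] := ant2.
have [_ _ disC2F2 _ _] := fvc2.
split; first exact: FVC_setD.
move=> X [sXA acycX].
have : #|C1| <= #|X :|: (C1 :|: F1) :&: C2|.
  apply: antler_card_le ant1 fvc2 _ (subsetUr _ _) _.
  - rewrite subUset subsetIl andbT; apply/subsetP => v /(subsetP sXA); rewrite !inE.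
    by case: (v \in C1); case: (v \in F1); rewrite ?andbF.
  - apply: acyclicS acycX; apply/subsetP => v; rewrite !inE.
    by case: (v \in X); case: (v \in C2); case: (v \in F2); case: (v \in C1); case: (v \in F1).
have [+ _] := leq_card_setU X ((C1 :|: F1) :&: C2).
have [+ _] := leq_card_setU (C1 :&: C2) (F1 :&: C2); rewrite -setIUl.
have := antler_cross_card fvc1 ant2; rewrite setIC.
have := card_setIU_disjoint C1 disC2F2; have := cardsID (C2 :|: F2) C1.
lia.
Qed.
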